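(* Let $\mathcal L$ be a finite relational language, $\mathcal H$ a hereditary $\mathcal L$-property, and $\{(\mathcal L_i,\mathcal H_i,\alpha_i):i\in[m]\}$ ($m\ge1$) a totally bounded cover of $\mathcal H$. Let $c=\max\{|\mathcal L_j|:j\in[m]\}$, where $|\mathcal L_j|$ is the number of symbols of $\mathcal L_j$. Then for all sufficiently large $n$, $$n^{-c}\max\{|(\mathcal H_j)_n|:j\in[m]\}\le|\mathcal H_n|\le\sum_{j\in[m]}|(\mathcal H_j)_n|.$$
   Context: A hereditary property (in any finite language) is a class of structures closed under isomorphism and substructures; $\mathcal H_n$ denotes its members with universe $[n]$; it is trivial if $\mathcal H_n=\emptyset$ for all large $n$. Totally bounded: there is $k$ such that in every member, for every relation symbol $R(x_1,\dots,x_s)$ and every partition $[s]=I\cup J$ into nonempty sets, each assignment of $\bar x_I$ has fewer than $k$ extensions to $\bar x_J$ satisfying $R$. A relational interpretation $\alpha:\mathcal L\to\mathcal L'$ assigns to each relation symbol $R(\bar x)$ of $\mathcal L$ a Boolean combination $\alpha(R)(\bar x)$ of atomic formulas built from relation symbols of $\mathcal L'$ and variables in $\bar x$; for an $\mathcal L'$-structure $\mathcal N'$, $\overline\alpha(\mathcal N')$ is the $\mathcal L$-structure with the same universe in which each $R$ is interpreted as the set defined by $\alpha(R)$ in $\mathcal N'$. For a hereditary $\mathcal L'$-property $\mathcal H'$, $\overline\alpha$ is a relational interpretation of $\mathcal H'$ in $\mathcal H$ if $\overline\alpha(\mathcal N')\in\mathcal H$ for all $\mathcal N'\in\mathcal H'$,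 and for all $\mathcal M',\mathcal N'\in\mathcal H'$ with the same universe, $\overline\alpha(\mathcal M')=\overline\alpha(\mathcal N')$ iff $\mathcal M'$ and $\mathcal N'$ interpret every relation symbol of $\mathcal L'$ identically. A totally bounded cover of $\mathcal H$ is a finite set $\{(\mathcal L_i,\mathcal H_i,\alpha_i):i\in[m]\}$ where each $\mathcal L_i$ is a finite language of relation and constant symbols, $\mathcal H_i$ is a totally bounded hereditary $\mathcal L_i$-property, $\alpha_i:\mathcal L\to\mathcal L_i$ is a relational interpretation with $\overline{\alpha_i}$ a relational interpretation of $\mathcal H_i$ in $\mathcal H$, and $\mathcal H=\mathcal F\cup\bigcup_{i=1}^m\{\overline{\alpha_i}(\mathcal N):\mathcal N\in\mathcal H_i\}$ for some trivial hereditary $\mathcal L$-property $\mathcal F$. *)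

From HB Require Import structures.
From mathcomp Require Import all_boot all_order all_algebra.
Set Implicit Arguments. Unset Strict Implicit. Unset Printing Implicit Defensive.

Record rlang := RLang { rk : nat; rar : 'I_rk -> nat }.

Record lang := Lang { base : rlang; ncst : nat }.
Arguments rar : clear implicits.

Definition lang_size (L : lang) : nat := rk (base L) + ncst L.

Definition rstruct (L : rlang) (n : nat) :=
  {dffun forall R : 'I_(rk L), {set (rar L R).-tuple 'I_n}}.

Definition struct (L : lang) (n : nat) :=
  (rstruct (base L) n * {ffun 'I_(ncst L) -> 'I_n})%type.

(* Pullback of the relations of a structure along f : 'I_m -> 'I_n
   (for injective f this is the induced substructure on the image of f,
   transported to the universe 'I_m). *)
Definition rpull (L : rlang) m n (f : 'I_m -> 'I_n) (M : rstruct L n) : rstruct L m :=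
  [ffun R => [set t : (rar L R).-tuple 'I_m | map_tuple f t \in M R]].

Definition rprop (L : rlang) := forall n, {set rstruct L n}.
Definition prop (L : lang) := forall n, {set struct L n}.

(* Hereditary: closed under isomorphism and substructures; both are captured by
   closure under pullback along injections. *)
Definition rhereditary (L : rlang) (H : rprop L) : Prop :=
  forall m n (f : 'I_m -> 'I_n), injective f ->
    forall M, M \in H n -> rpull f M \in H m.

Definition hereditary (L : lang) (H : prop L) : Prop :=
  forall m n (f : 'I_m -> 'I_n), injective f ->
    forall (M : struct L n) (M' : struct L m), M \in H n ->
      M'.1 = rpull f M.1 -> (forall c, f (M'.2 c) = M.2 c) -> M' \in H m.

Definition rtrivial (L : rlang) (H : rprop L) : Prop :=
  exists N, forall n, N <= n -> H n = set0.

Definition totally_bounded (L : lang) (H : prop L) : Prop :=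
  exists k, forall n (M : struct L n), M \in H n ->
    forall (R : 'I_(rk (base L))) (I : {set 'I_(rar (base L) R)}),
      I != set0 -> I != setT ->
      forall t : (rar (base L) R).-tuple 'I_n,
        #|[set u in M.1 R | [forall i in I, tnth u i == tnth t i]]| < k.

Inductive term (nv nc : nat) :=
  | TVar of 'I_nv
  | TCst of 'I_nc.

Inductive formula (L : lang) (nv : nat) :=
  | FRel (R : 'I_(rk (base L))) of ('I_(rar (base L) R) -> term nv (ncst L))
  | FEq of term nv (ncst L) & term nv (ncst L)
  | FTrue
  | FNot of formula L nv
  | FAnd of formula L nv & formula L nv
  | FOr of formula L nv & formula L nv.

Definition evalt (L : lang) n nv (M : struct L n) (v : 'I_nv -> 'I_n)
  (t : term nv (ncst L)) : 'I_n :=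
  match t with TVar i => v i | TCst c => M.2 c end.

Fixpoint evalf (L : lang) n nv (M : struct L n) (v : 'I_nv -> 'I_n)
  (f : formula L nv) : bool :=
  match f with
  | FRel R args => [tuple evalt M v (args i) | i < rar (base L) R] \in M.1 R
  | FEq a b => evalt M v a == evalt M v b
  | FTrue => true
  | FNot g => ~~ evalf M v g
  | FAnd g h => evalf M v g && evalf M v h
  | FOr g h => evalf M v g || evalf M v h
  end.

Definition rinterp (L : rlang) (L' : lang) :=
  forall R : 'I_(rk L), formula L' (rar L R).

Definition interp (L : rlang) (L' : lang) (alpha : rinterp L L') n
  (N : struct L' n) : rstruct L n :=
  [ffun R => [set t : (rar L R).-tuple 'I_n | evalf N (tnth t) (alpha R)]].

Definition is_rel_interp (L : rlang) (L' : lang) (alpha : rinterp L L')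
  (H' : prop L') (H : rprop L) : Prop :=
  (forall n (N : struct L' n), N \in H' n -> interp alpha N \in H n) /\
  (forall n (M N : struct L' n), M \in H' n -> N \in H' n ->
     (interp alpha M = interp alpha N <-> M.1 = N.1)).

Definition tb_cover (L : rlang) (H : rprop L) (m : nat)
  (Ls : 'I_m -> lang) (Hs : forall i, prop (Ls i))
  (alphas : forall i, rinterp L (Ls i)) : Prop :=
  (forall i, hereditary (Hs i) /\ totally_bounded (Hs i) /\
             is_rel_interp (alphas i) (Hs i) H) /\
  exists F : rprop L, rhereditary F /\ rtrivial F /\
    forall n, H n = F n :|: \bigcup_(i < m) [set interp (alphas i) N | N in Hs i n].

From HB Require Import structures.
From mathcomp Require Import all_boot all_order all_algebra.
Import GRing.Theory Num.Theory.

(* Once the trivial part F of the cover is empty, H_n is the union of the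
   images of the (H_j)_n, which gives the upper bound.  Conversely, the image of
   a member of H_j under alpha_j determines its relations, so it determines the
   member up to the interpretation of its constants, for which there are at
   most n ^ |L_j| choices: |(H_j)_n| <= n ^ c |H_n|. *)

Lemma card_bigcup_le {I T : finType} (P : pred I) (A : I -> {set T}) :
  #|\bigcup_(i | P i) A i| <= \sum_(i | P i) #|A i|.
Proof.
elim/big_rec2: _ => [|i k X _ leXk]; first by rewrite cards0.
exact: leq_trans (leq_card_setU _ X) (leq_add (leqnn _) leXk).
Qed.

Lemma card_rel_interp_le {L : rlang} {H : rprop L} {L' : lang} {H' : prop L'}
    {alpha : rinterp L L'} n :
  is_rel_interp alpha H' H -> #|H' n| <= #|H n| * n ^ ncst L'.
Proof.
move=> [alphaH alpha_inj].
pose code (N : struct L' n) := (interp alpha N, N.2).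
have code_inj : {in H' n &, injective code}.
  move=> [M1 M2] [N1 N2] HM HN [eq_rel eq_cst].
  by have /= eq12 := proj1 (alpha_inj n _ _ HM HN) eq_rel; rewrite eq12 eq_cst.
rewrite -(card_in_imset code_inj).
have sub_code : code @: H' n \subset setX (H n) setT.
  by apply/subsetP => _ /imsetP[N HN ->]; rewrite !inE alphaH.
apply: leq_trans (subset_leq_card sub_code) _.
by rewrite cardsX cardsT card_ffun !card_ord.
Qed.

Lemma ler_natVXM (R : numFieldType) (a b n c : nat) :
  0 < n -> a <= b * n ^ c -> (n%:R ^- c * a%:R <= b%:R :> R)%R.
Proof.
move=> n_gt0 le_ab.
have nX_gt0 : (0 < n%:R ^+ c :> R)%R by rewrite exprn_gt0 // ltr0n.
by rewrite mulrC ler_pdivrMr // -natrX -natrM ler_nat.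
Qed.

Section TotallyBoundedCover.

Context {L : rlang} {H : rprop L} {m : nat} {Ls : 'I_m -> lang}.
Context {Hs : forall i, prop (Ls i)} {alphas : forall i, rinterp L (Ls i)}.
Hypothesis cover : tb_cover H Hs alphas.

Lemma tb_cover_card_le_sum :
  exists N, forall n, N <= n -> #|H n| <= \sum_(j < m) #|Hs j n|.
Proof.
have [_ [F [_ [[N F_trivial] H_cover]]]] := cover.
exists N => n le_Nn; rewrite H_cover F_trivial // set0U.
apply: leq_trans (card_bigcup_le _ _) _.
by apply: leq_sum => j _; apply: leq_imset_card.
Qed.

Lemma tb_cover_card_ge j n (c : nat) :
  0 < n -> lang_size (Ls j) <= c -> #|Hs j n| <= #|H n| * n ^ c.
Proof.
move=> n_gt0 le_size_c; have [cover_j _] := cover.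
apply: leq_trans (card_rel_interp_le n (proj2 (proj2 (cover_j j)))) _.
rewrite leq_mul2l leq_pexp2l ?orbT //.
exact: leq_trans (leq_addl _ _) le_size_c.
Qed.

End TotallyBoundedCover.

Theorem mainTheorem14 (L : rlang) (H : rprop L) (m : nat)
  (Ls : 'I_m -> lang) (Hs : forall i, prop (Ls i))
  (alphas : forall i, rinterp L (Ls i)) :
  0 < m ->
  rhereditary H ->
  tb_cover H Hs alphas ->
  let c := \max_(j < m) lang_size (Ls j) in
  exists N, forall n, N <= n ->
    ((n%:R : rat) ^- c * (\max_(j < m) #|Hs j n|)%:R <= (#|H n|)%:R)%R /\
    #|H n| <= \sum_(j < m) #|Hs j n|.
Proof.
move=> m_gt0 _ cover c.
have [N le_sum] := tb_cover_card_le_sum cover.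
exists (maxn N 1) => n; rewrite geq_max => /andP[le_Nn n_gt0].
split; last exact: le_sum le_Nn.
have [|j ->] := @eq_bigmax _ (fun j => #|Hs j n|); first by rewrite card_ord.
apply: ler_natVXM => //.
exact: tb_cover_card_ge cover j n c n_gt0 (leq_bigmax j).
Qed.
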